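(* Let $\Delta\in\mathfrak{gl}_n(A)$ be such that $\Phi$ is right compatible with $N$, let $\alpha\in\mathfrak{gl}_n(R)$ and let $u\in GL_n(R)$ satisfy $\delta u=\Delta^\alpha(u)$. Then $N^\delta\subset G_u$.
   Context: Let $p$ be an odd prime, $R$ the unique complete discrete valuation ring with maximal ideal $pR$ and residue field an algebraic closure of $\mathbb F_p$; $\phi$ the unique lift of Frobenius, $\delta a=(\phi(a)-a^p)/p$; on matrices $\phi,\delta$ act entrywise, $u^{(p)}=(u_{ij}^p)$. $x$ is an $n\times n$ matrix of indeterminates, $A=R[x,\det(x)^{-1}]^\wedge$. For $\Delta\in\mathfrak{gl}_n(A)$: $\Phi(x)=x^{(p)}+p\Delta(x)$, $\Delta^\alpha(x)=\alpha\Phi(x)+\Delta(x)$. $G_u=\{v\in GL_n(R):\phi(v)=\Phi(u)^{-1}\Phi(uv)\}$. $R^\delta=\{\lambda:\delta\lambda=0\}$. $T$: diagonal matrices in $GL_n(R)$; $W$: permutation matrices; $N=WT$; $N^\delta$: elements of $N$ with all entries in $R^\delta$. $\Phi$ is right compatible with $N$ if $\Phi(ac)=\Phi(a)c^{(p)}$ for all $a\in GL_n(R)$ and $c\in N$. *)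

From HB Require Import structures.
From mathcomp Require Import all_boot all_order all_algebra all_fingroup.
From mathcomp Require Import mpoly.
From Stdlib Require Import ClassicalEpsilon.
Set Implicit Arguments. Unset Strict Implicit. Unset Printing Implicit Defensive.
Import Order.TTheory GRing.Theory Num.Theory.
Local Open Scope ring_scope.

Definition pdiv_by (R : comNzRingType) (p k : nat) (x : R) : Prop :=
  exists y : R, x = (p%:R) ^+ k * y.

(* R is "the" complete DVR with maximal ideal pR and residue field an
   algebraic closure of F_p (i.e. W(\bar F_p)), characterised axiomatically. *)
Definition is_Wbar (R : idomainType) (p : nat) : Prop :=
  prime p /\ odd p /\
      (* p is a nonzero non-unit, and every nonzero element is unit * p^k:
         R is a DVR with uniformizer p, maximal ideal pR *)
      (p%:R : R) != 0 /\ ~~ ((p%:R : R) \is a GRing.unit) /\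
      (forall x : R, x != 0 ->
         exists (k : nat) (w : R), w \is a GRing.unit /\ x = (p%:R) ^+ k * w) /\
      (* p-adic completeness *)
      (forall a : nat -> R, (forall k, pdiv_by p k (a k.+1 - a k)) ->
         exists l : R, forall k, pdiv_by p k (l - a k)) /\
      (* residue field R/pR is algebraically closed *)
      (forall q : {poly R}, q \is monic -> (1 < size q)%N ->
         exists a : R, pdiv_by p 1 q.[a]) /\
    (* residue field is algebraic over F_p *)
      (forall a : R, exists k : nat, (0 < k)%N /\ pdiv_by p 1 (a ^+ (p ^ k) - a)).

(* phi is a lift of Frobenius (such a lift is unique on W(\bar F_p)) *)
Definition frob_lift (R : comNzRingType) (p : nat) (phi : {rmorphism R -> R}) : Prop :=
  forall a : R, pdiv_by p 1 (phi a - a ^+ p).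

(* delta a = (phi a - a^p)/p : the (unique, p being a nonzerodivisor) d
   with phi a - a^p = p d *)
Definition delta (R : comNzRingType) (p : nat) (phi : R -> R) (a : R) : R :=
  epsilon (inhabits 0) (fun d : R => phi a - a ^+ p = p%:R * d).

Definition Rdelta (R : comNzRingType) (p : nat) (phi : R -> R) (l : R) : Prop :=
  delta p phi l = 0.

Definition mx_phi (R : comNzRingType) n (phi : R -> R) (u : 'M[R]_n) : 'M[R]_n :=
  map_mx phi u.
Definition mx_pow (R : comNzRingType) n (p : nat) (u : 'M[R]_n) : 'M[R]_n :=
  map_mx (fun a => a ^+ p) u.
Definition mx_delta (R : comNzRingType) n (p : nat) (phi : R -> R) (u : 'M[R]_n)
  : 'M[R]_n := map_mx (delta p phi) u.

Definition mx_coords (R : comNzRingType) n (u : 'M[R]_n) : 'I_(n * n) -> R :=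
  fun i => mxvec u 0 i.

(* Elements of A = R[x, det(x)^{-1}]^ (p-adic completion) are identified with
   the functions on GL_n(R) they induce: f is in A iff for every k it agrees
   mod p^k on GL_n(R) with some P(x) det(x)^{-m}, P a polynomial. *)
Definition in_A (R : idomainType) n (p : nat) (f : 'M[R]_n -> R) : Prop :=
  forall k : nat, exists (P : {mpoly R[n * n]}) (m : nat),
    forall u : 'M[R]_n, u \in unitmx ->
      pdiv_by p k (f u - P.@[mx_coords u] * (\det u) ^- m).

Definition in_glA (R : idomainType) n (p : nat) (Delta : 'M[R]_n -> 'M[R]_n)
  : Prop := forall i j : 'I_n, in_A p (fun x => Delta x i j).

Definition Phi (R : comNzRingType) n (p : nat) (Delta : 'M[R]_n -> 'M[R]_n)
  (x : 'M[R]_n) : 'M[R]_n := mx_pow p x + p%:R *: Delta x.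

Definition Delta_alpha (R : comNzRingType) n (p : nat)
  (Delta : 'M[R]_n -> 'M[R]_n) (alpha : 'M[R]_n) (x : 'M[R]_n) : 'M[R]_n :=
  alpha *m Phi p Delta x + Delta x.

Definition in_N (R : comUnitRingType) n (c : 'M[R]_n) : Prop :=
  exists (s : 'S_n) (d : 'rV[R]_n),
    (forall i, d 0 i \is a GRing.unit) /\ c = perm_mx s *m diag_mx d.

Definition in_Ndelta (R : comUnitRingType) n (p : nat) (phi : R -> R)
  (c : 'M[R]_n) : Prop :=
  in_N c /\ forall i j, Rdelta p phi (c i j).

Definition right_compatible_N (R : comUnitRingType) n (p : nat)
  (Delta : 'M[R]_n -> 'M[R]_n) : Prop :=
  forall a c : 'M[R]_n, a \in unitmx -> in_N c ->
    Phi p Delta (a *m c) = Phi p Delta a *m mx_pow p c.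

Definition in_G (R : comUnitRingType) n (p : nat) (phi : R -> R)
  (Delta : 'M[R]_n -> 'M[R]_n) (u v : 'M[R]_n) : Prop :=
  v \in unitmx /\
  mx_phi phi v = invmx (Phi p Delta u) *m Phi p Delta (u *m v).

From HB Require Import structures.
From mathcomp Require Import all_boot all_order all_algebra all_fingroup.
From mathcomp Require Import mpoly.
From Stdlib Require Import ClassicalEpsilon.
Import GRing.Theory.
Local Open Scope ring_scope.

(* Writing phi(u) = u^(p) + p delta(u), the hypothesis on u gives
   phi(u) = (1 + p alpha) Phi(u), so Phi(u) is invertible.  For c in N^delta,
   phi(c) = c^(p) entrywise, and right compatibility gives
   Phi(u c) = Phi(u) c^(p) = Phi(u) phi(c). *)

Section FrobeniusLift.

Variables (R : comUnitRingType) (p : nat) (phi : {rmorphism R -> R}).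
Hypothesis phi_frob : frob_lift p phi.

Lemma frob_liftE (a : R) : phi a = a ^+ p + p%:R * delta p phi a.
Proof.
have -> : p%:R * delta p phi a = phi a - a ^+ p.
  apply/esym/(epsilon_spec (inhabits 0) (fun d => phi a - a ^+ p = p%:R * d)).
  by have [y ->] := phi_frob a; exists y; rewrite expr1.
by rewrite addrC subrK.
Qed.

Lemma Rdelta_frob (a : R) : Rdelta p phi a -> phi a = a ^+ p.
Proof. by rewrite /Rdelta frob_liftE => ->; rewrite mulr0 addr0. Qed.

Lemma mx_phiE n (u : 'M[R]_n) :
  mx_phi phi u = mx_pow p u + p%:R *: mx_delta p phi u.
Proof. by apply/matrixP=> i j; rewrite !mxE frob_liftE. Qed.

Lemma mx_phi_Rdelta n (c : 'M[R]_n) :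
  (forall i j, Rdelta p phi (c i j)) -> mx_phi phi c = mx_pow p c.
Proof. by move=> cRd; apply/matrixP=> i j; rewrite !mxE Rdelta_frob. Qed.

Lemma mx_phi_unitmx n (u : 'M[R]_n) : u \in unitmx -> mx_phi phi u \in unitmx.
Proof. by rewrite !unitmxE /mx_phi det_map_mx; exact: rmorph_unit. Qed.

Variables (n : nat) (Delta : 'M[R]_n -> 'M[R]_n) (alpha u : 'M[R]_n).
Hypothesis delta_u : mx_delta p phi u = Delta_alpha p Delta alpha u.

Lemma mx_phi_Delta_alpha :
  mx_phi phi u = (1 + p%:R *: alpha) *m Phi p Delta u.
Proof.
rewrite mx_phiE delta_u /Delta_alpha /Phi mulmxDl mul1mx -scalemxAl scalerDr.
by rewrite -addrA [_ + p%:R *: Delta u]addrC.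
Qed.

Lemma Phi_unitmx : u \in unitmx -> Phi p Delta u \in unitmx.
Proof.
by move/mx_phi_unitmx; rewrite mx_phi_Delta_alpha unitmx_mul => /andP[].
Qed.

End FrobeniusLift.

Lemma in_N_unitmx (R : comUnitRingType) n (c : 'M[R]_n) :
  in_N c -> c \in unitmx.
Proof.
case=> s [d [d_unit ->]].
rewrite unitmx_mul unitmx_perm unitmxE det_diag.
by apply: rpred_prod => i _; exact: d_unit.
Qed.

Theorem lemma3p4 (R : idomainType) (p : nat) (phi : {rmorphism R -> R})
  (n : nat) (Delta : 'M[R]_n -> 'M[R]_n) (alpha u : 'M[R]_n) :
  is_Wbar R p -> frob_lift p phi ->
  in_glA p Delta ->
  right_compatible_N p Delta ->
  u \in unitmx ->
  mx_delta p phi u = Delta_alpha p Delta alpha u ->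
  forall c : 'M[R]_n, in_Ndelta p phi c -> in_G p phi Delta u c.
Proof.
move=> _ phi_frob _ Phi_compat u_unit delta_u c [cN cRd].
split; first exact: in_N_unitmx.
rewrite Phi_compat // mulKmx; last exact: Phi_unitmx delta_u u_unit.
exact: mx_phi_Rdelta.
Qed.
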